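(* Let $R\in\mathbb{R}^{m\times N}$, $\lambda\ge 0$, and let $\sigma_1$ be the largest singular value of $R$, with corresponding left singular vector $u^1\in\mathbb{R}^m$ and right singular vector $v_1\in\mathbb{R}^{N}$ (unit vectors with $R v_1=\sigma_1 u^1$). Consider the problem $$\min_{d\in\mathbb{R}^m,\ \|d\|_2=1,\ x\in\mathbb{R}^{1\times N}}\ \frac12\|d\,x-R\|_F^2+\lambda\,\big\|\,\|x\|_2\,\big\|_0 ,$$ where $\|\,\|x\|_2\|_0$ equals $1$ if $x\neq 0$ and $0$ if $x=0$. If $\frac12\|\sigma_1 u^1 v_1^T-R\|_F^2\le\frac12\|R\|_F^2-\lambda$, then $(d,x)=(u^1,\sigma_1 v_1^T)$ is a minimizer. Otherwise, for any $d_0\in\mathbb{R}^m$ with $\|d_0\|_2=1$, the pair $(d_0,0)$ is a minimizer.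
   Context: This is the per-atom update of a K-SVD-type dictionary learning scheme with the row-sparsity ($\ell_{2,0}$) penalty counting nonzero rows of the representation matrix, where $R$ is the residual after removing the contribution of the current atom; in the paper $d_0$ is the current (previous) atom. *)

From mathcomp Require Import all_boot all_order all_algebra.
From mathcomp Require Import reals.
Set Implicit Arguments. Unset Strict Implicit. Unset Printing Implicit Defensive.
Import Order.TTheory GRing.Theory Num.Theory.
Local Open Scope ring_scope.

(* Squared Frobenius norm ||A||_F^2; for a column vector this is ||d||_2^2. *)
Definition frob2 (K : realType) (p q : nat) (A : 'M[K]_(p, q)) : K :=
  \sum_(i < p) \sum_(j < q) A i j ^+ 2.

(* s is the largest singular value of R: the singular values are the square
   roots of the eigenvalues of R^T R, so s >= 0, s^2 is an eigenvalue of
   R^T R and every eigenvalue of R^T R is at most s^2. *)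
Definition largest_singular_value (K : realType) (m N : nat)
    (R : 'M[K]_(m, N)) (s : K) : Prop :=
  [/\ 0 <= s, eigenvalue (R^T *m R) (s ^+ 2)
    & forall a, eigenvalue (R^T *m R) a -> a <= s ^+ 2].

Definition l20 (K : realType) (N : nat) (x : 'rV[K]_N) : K :=
  if x == 0 then 0 else 1.

Definition obj (K : realType) (m N : nat) (R : 'M[K]_(m, N)) (lam : K)
    (d : 'cV[K]_m) (x : 'rV[K]_N) : K :=
  2^-1 * frob2 (d *m x - R) + lam * l20 x.

Definition is_minimizer (K : realType) (m N : nat) (R : 'M[K]_(m, N)) (lam : K)
    (d : 'cV[K]_m) (x : 'rV[K]_N) : Prop :=
  frob2 d = 1 /\
  forall (d' : 'cV[K]_m) (x' : 'rV[K]_N), frob2 d' = 1 ->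
    obj R lam d x <= obj R lam d' x'.

(* For a unit vector d, completing the square in x gives
   ||d x - R||_F^2 = ||x - d^T R||^2 + ||R||_F^2 - ||d^T R||^2, and
   ||d^T R||^2 <= sigma_1^2 because the quadratic form of R^T R is bounded by
   its largest eigenvalue sigma_1^2 times the squared norm.  Hence every pair
   with x <> 0 costs at least (||R||_F^2 - sigma_1^2)/2 + lam, a bound attained
   at (u^1, sigma_1 v_1^T), while every pair with x = 0 costs ||R||_F^2 / 2;
   the hypothesis of each case says which of the two values is smaller. *)
From mathcomp Require Import all_boot all_order all_algebra.
From mathcomp Require Import classical_sets reals.
From mathcomp Require Import ring lra.
Set Implicit Arguments. Unset Strict Implicit. Unset Printing Implicit Defensive.
Import Order.TTheory GRing.Theory Num.Theory.
Local Open Scope ring_scope.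

Lemma quadratic_ge0_disc (K : realFieldType) (a b c : K) : 0 <= c ->
  (forall t, 0 <= a + 2 * t * b + t ^+ 2 * c) -> b ^+ 2 <= a * c.
Proof.
move=> c_ge0 q_ge0; have [c0|c_neq0] := eqVneq c 0.
  rewrite c0 in q_ge0 *; have [->|b_neq0] := eqVneq b 0.
    by rewrite expr0n mulr0.
  have := q_ge0 (- (a + 1) / (2 * b)).
  have -> : a + 2 * (- (a + 1) / (2 * b)) * b + (- (a + 1) / (2 * b)) ^+ 2 * 0
            = -1 by field; rewrite b_neq0.
  by rewrite ler0N1.
have c_gt0 : 0 < c by rewrite lt_def c_neq0.
have := q_ge0 (- b / c).
have -> : a + 2 * (- b / c) * b + (- b / c) ^+ 2 * c = (a * c - b ^+ 2) / c
  by field.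
by rewrite pmulr_lge0 ?invr_gt0 // subr_ge0.
Qed.

Section BilinearForm.
Variables (K : realFieldType) (n : nat).
Implicit Types (B : 'M[K]_n) (x y z w : 'rV[K]_n).

Definition bform B x y : K := (x *m B *m y^T) 0 0.

Lemma bformE B x y : bform B x y = \sum_j (\sum_i x 0 i * B i j) * y 0 j.
Proof. by rewrite /bform mxE; apply: eq_bigr => j _; rewrite !mxE. Qed.

Lemma bform1E x y : bform 1%:M x y = \sum_i x 0 i * y 0 i.
Proof. by rewrite /bform mulmx1 mxE; apply: eq_bigr => j _; rewrite !mxE. Qed.

Lemma bform1_diagE w : bform 1%:M w w = \sum_i w 0 i ^+ 2.
Proof. by rewrite bform1E; apply: eq_bigr => i _; rewrite expr2. Qed.

Lemma bform0 B : bform B 0 0 = 0.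
Proof. by rewrite /bform !mul0mx mxE. Qed.

Lemma bform_tr B x y : bform B^T x y = bform B y x.
Proof.
have -> : bform B y x = (y *m B *m x^T)^T 0 0 by rewrite mxE.
by rewrite !trmx_mul trmxK mulmxA.
Qed.

Lemma bform_sym B x y : B^T = B -> bform B x y = bform B y x.
Proof. by move=> symB; rewrite -{1}symB bform_tr. Qed.

Lemma bformDl B x y z t : bform B (x + t *: y) z = bform B x z + t * bform B y z.
Proof. by rewrite /bform !mulmxDl -!scalemxAl !mxE. Qed.

Lemma bformDr B x y z t : bform B z (x + t *: y) = bform B z x + t * bform B z y.
Proof. by rewrite -!(bform_tr B) bformDl. Qed.

Lemma bform_CauchySchwarz B x y : B^T = B -> (forall w, 0 <= bform B w w) ->
  bform B x y ^+ 2 <= bform B x x * bform B y y.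
Proof.
move=> symB psdB; apply: quadratic_ge0_disc => // t.
have := psdB (x + t *: y); rewrite bformDl !bformDr (bform_sym y x) //.
by congr (0 <= _); ring.
Qed.

Lemma bform1_ge0 w : 0 <= bform 1%:M w w.
Proof. by rewrite bform1_diagE sumr_ge0 // => i _; rewrite sqr_ge0. Qed.

Lemma bform1_gt0 w : w != 0 -> 0 < bform 1%:M w w.
Proof.
move=> w_neq0; rewrite lt_def bform1_ge0 andbT bform1_diagE.
apply: contra w_neq0 => /eqP/psumr_eq0P w2_eq0; apply/eqP/rowP => i.
by rewrite mxE; apply/eqP; rewrite -sqrf_eq0 w2_eq0 // => j _; rewrite sqr_ge0.
Qed.

Lemma normrM_le_bform1 w i j : `|w 0 i| * `|w 0 j| <= bform 1%:M w w.
Proof.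
have sqr_le k : `|w 0 k| ^+ 2 <= bform 1%:M w w.
  by rewrite bform1_diagE real_normK ?num_real // (bigD1 k) //= lerDl sumr_ge0
    // => l _; rewrite sqr_ge0.
have := sqr_le i; have := sqr_le j; have := sqr_ge0 (`|w 0 i| - `|w 0 j|).
by rewrite sqrrB mulr2n; lra.
Qed.

Lemma bform_le_sum_norm B w :
  bform B w w <= (\sum_j \sum_i `|B i j|) * bform 1%:M w w.
Proof.
rewrite bformE mulr_suml; apply: ler_sum => j _.
rewrite !mulr_suml; apply: ler_sum => i _.
apply: le_trans (ler_norm _) _.
by rewrite !normrM mulrAC mulrC ler_wpM2l // normrM_le_bform1.
Qed.

Lemma psd_unitmx_coercive B : B^T = B -> (forall w, 0 <= bform B w w) ->
  B \in unitmx -> exists2 C, 0 < C & forall w, bform 1%:M w w <= C * bform B w w.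
Proof.
move=> symB psdB unitB; pose S := \sum_j \sum_i `|(invmx B)^T i j|.
have S_ge0 : 0 <= S by do 2!apply: sumr_ge0 => ? _.
exists (1 + S) => [|v]; first by lra.
have [v2_eq0|v2_neq0] := eqVneq (bform 1%:M v v) 0.
  by rewrite v2_eq0 mulr_ge0 ?psdB //; lra.
have v2_gt0 : 0 < bform 1%:M v v by rewrite lt_def v2_neq0 bform1_ge0.
pose y := v *m invmx B.
have yB : y *m B = v by rewrite mulmxKV.
have Byv : bform B y v = bform 1%:M v v by rewrite /bform yB mulmx1.
have Byy : bform B y y = bform (invmx B)^T v v.
  by rewrite /bform yB /y trmx_mul mulmxA.
(* Cauchy-Schwarz for [B] at [y] and [v]:
   [|v|^4 <= (v B^-T v) (v B v) <= S |v|^2 (v B v)]. *)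
have := bform_CauchySchwarz y v symB psdB; rewrite Byv Byy.
have Biv := bform_le_sum_norm (invmx B)^T v.
move=> /le_trans/(_ (ler_wpM2r (psdB v) Biv)).
rewrite expr2 -mulrA mulrCA ler_pM2l // => le_S.
by apply: le_trans le_S _; rewrite ler_wpM2r ?psdB // lerDr.
Qed.

End BilinearForm.

Lemma bform_le_max_eigenvalue (K : realType) n (A : 'M[K]_n) (c : K) :
  A^T = A -> (forall a, eigenvalue A a -> a <= c) ->
  forall w, bform A w w <= c * bform 1%:M w w.
Proof.
case: n A => [|n] A symA ev_le w; first by rewrite bformE bform1E !big_ord0 mulr0.
pose rq (v : 'rV[K]_n.+1) := bform A v v / bform 1%:M v v.
pose S : set K := fun x => exists2 v, v != 0 & rq v = x.
have e_neq0 : const_mx 1 != 0 :> 'rV[K]_n.+1.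
  by apply/eqP => /rowP/(_ ord0)/eqP; rewrite !mxE oner_eq0.
have supS : has_sup S.
  split; first by exists (rq (const_mx 1)), (const_mx 1).
  exists (\sum_j \sum_i `|A i j|) => _ [v v_neq0 <-].
  by rewrite ler_pdivrMr ?bform1_gt0 // bform_le_sum_norm.
pose M := sup S.
have le_M v : bform A v v <= M * bform 1%:M v v.
  have [->|v_neq0] := eqVneq v 0; first by rewrite !bform0 mulr0.
  by rewrite -ler_pdivrMr ?bform1_gt0 //; apply: sup_upper_bound => //; exists v.
pose B := M%:M - A.
have BE v : bform B v v = M * bform 1%:M v v - bform A v v.
  by rewrite /bform mulmxBr mul_mx_scalar mulmxBl -scalemxAl mulmx1 !mxE.
have symB : B^T = B by rewrite linearB /= tr_scalar_mx symA.
have psdB v : 0 <= bform B v v by rewrite BE subr_ge0.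
(* The Rayleigh quotients come arbitrarily close to [M], so [B] is not
   coercive; hence it is singular and [M] is an eigenvalue of [A]. *)
have M_eigen : eigenvalue A M.
  rewrite /eigenvalue /eigenspace kermx_eq0 row_free_unit.
  have -> : A - M%:M = -1 *: B by rewrite scaleN1r opprB.
  rewrite unitmxZ ?unitrN1 //.
  apply/negP => /(psd_unitmx_coercive symB psdB) [C C_gt0 coerciveB].
  have iC_gt0 : 0 < C^-1 by rewrite invr_gt0.
  have [_ [v v_neq0 <-]] := sup_adherent iC_gt0 supS.
  have v2_gt0 := bform1_gt0 v_neq0.
  apply/negP; rewrite -leNgt ler_pdivrMr // mulrBl.
  have := coerciveB v; rewrite BE -ler_pdivrMl // [C^-1 * _]mulrC -/M; lra.
apply: le_trans (le_M w) _; apply: ler_wpM2r; [exact: bform1_ge0 | exact: ev_le].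
Qed.

Section Frobenius.
Variable K : realType.

Lemma frob2_row N (x : 'rV[K]_N) : frob2 x = bform 1%:M x x.
Proof. by rewrite /frob2 big_ord1 bform1_diagE. Qed.

Lemma frob2_tr m N (A : 'M[K]_(m, N)) : frob2 A^T = frob2 A.
Proof. by rewrite /frob2 exchange_big; do 2!apply: eq_bigr => ? _; rewrite mxE. Qed.

Lemma frob2N m N (A : 'M[K]_(m, N)) : frob2 (- A) = frob2 A.
Proof. by do 2!apply: eq_bigr => ? _; rewrite mxE sqrrN. Qed.

Lemma frob2Z m N (a : K) (A : 'M[K]_(m, N)) : frob2 (a *: A) = a ^+ 2 * frob2 A.
Proof.
rewrite /frob2 mulr_sumr; apply: eq_bigr => i _; rewrite mulr_sumr.
by apply: eq_bigr => j _; rewrite mxE exprMn.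
Qed.

Lemma frob2_mul_sub m N (R : 'M[K]_(m, N)) (d : 'cV[K]_m) (x : 'rV[K]_N) :
  frob2 (d *m x - R) = frob2 d * frob2 x - 2 * bform 1%:M x (d^T *m R) + frob2 R.
Proof.
have -> : bform 1%:M x (d^T *m R) = \sum_i \sum_j d i 0 * x 0 j * R i j.
  rewrite bform1E exchange_big; apply: eq_bigr => j _; rewrite !mxE mulr_sumr.
  by apply: eq_bigr => i _; rewrite !mxE; ring.
have -> : frob2 d = \sum_i d i 0 ^+ 2 by apply: eq_bigr => i _; rewrite big_ord1.
rewrite [frob2 x]/frob2 big_ord1 mulr_suml mulr_sumr -sumrB -big_split /=.
apply: eq_bigr => i _; rewrite !mulr_sumr -sumrB -big_split /=.
by apply: eq_bigr => j _; rewrite !mxE big_ord1 ?mxE; ring.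
Qed.

Lemma frob2_rowB N (x y : 'rV[K]_N) :
  frob2 (x - y) = frob2 x - 2 * bform 1%:M x y + frob2 y.
Proof.
by rewrite !frob2_row -scaleN1r bformDl !bformDr (bform_sym y x) ?trmx1 //; ring.
Qed.

Lemma frob2_mul_sub_unit m N (R : 'M[K]_(m, N)) (d : 'cV[K]_m) (x : 'rV[K]_N) :
  frob2 d = 1 ->
  frob2 (d *m x - R) = frob2 (x - d^T *m R) + (frob2 R - frob2 (d^T *m R)).
Proof. by move=> d1; rewrite frob2_mul_sub frob2_rowB d1; ring. Qed.

Lemma frob2_trmx_mul_le m N (R : 'M[K]_(m, N)) (s : K) (d : 'cV[K]_m) :
  largest_singular_value R s -> frob2 d = 1 -> frob2 (d^T *m R) <= s ^+ 2.
Proof.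
move=> [_ _ ev_le] d1; set z := d^T *m R.
have symRR : (R^T *m R)^T = R^T *m R by rewrite trmx_mul trmxK.
have := bform_CauchySchwarz d^T (z *m R^T) (trmx1 _ _) (@bform1_ge0 _ _).
have -> : bform 1%:M d^T (z *m R^T) = frob2 z.
  by rewrite frob2_row /bform !mulmx1 trmx_mul trmxK mulmxA.
have -> : bform 1%:M (z *m R^T) (z *m R^T) = bform (R^T *m R) z z.
  by rewrite /bform mulmx1 trmx_mul trmxK !mulmxA.
rewrite -frob2_row frob2_tr d1 mul1r => z4_le.
have z2_le := bform_le_max_eigenvalue symRR ev_le z; rewrite -frob2_row in z2_le.
have [z2_eq0|z2_neq0] := eqVneq (frob2 z) 0; first by rewrite z2_eq0 sqr_ge0.
have z2_gt0 : 0 < frob2 z by rewrite lt_def z2_neq0 frob2_row bform1_ge0.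
by rewrite -(ler_pM2r z2_gt0) -expr2 (le_trans z4_le z2_le).
Qed.

Lemma frob2_mul_sub_ge m N (R : 'M[K]_(m, N)) (s : K) (d : 'cV[K]_m) (x : 'rV[K]_N) :
  largest_singular_value R s -> frob2 d = 1 -> frob2 R - s ^+ 2 <= frob2 (d *m x - R).
Proof.
move=> sR d1; rewrite frob2_mul_sub_unit //.
have := frob2_trmx_mul_le sR d1; have := frob2_row (x - d^T *m R).
by have := bform1_ge0 (x - d^T *m R); lra.
Qed.

Lemma frob2_singular_rank1_sub m N (R : 'M[K]_(m, N)) (s : K)
    (u : 'cV[K]_m) (v : 'cV[K]_N) :
  frob2 u = 1 -> frob2 v = 1 -> R *m v = s *: u ->
  frob2 (s *: (u *m v^T) - R) = frob2 R - s ^+ 2.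
Proof.
move=> u1 v1 Rv; rewrite scalemxAr frob2_mul_sub frob2Z frob2_tr u1 v1.
have -> : bform 1%:M (s *: v^T) (u^T *m R) = s ^+ 2 * frob2 u.
  rewrite -frob2_tr frob2_row /bform !mulmx1 trmx_mul trmxK -scalemxAl mulmxA.
  by rewrite -trmx_mul Rv linearZ /= -scalemxAl !mxE mulrA expr2.
by rewrite u1; ring.
Qed.

End Frobenius.

Section Objective.
Variables (K : realType) (m N : nat) (R : 'M[K]_(m, N)) (lam : K).

Lemma obj0 (d : 'cV[K]_m) : obj R lam d 0 = 2^-1 * frob2 R.
Proof. by rewrite /obj /l20 eqxx mulr0 addr0 mulmx0 sub0r frob2N. Qed.

Lemma obj_le (d : 'cV[K]_m) (x : 'rV[K]_N) : 0 <= lam ->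
  obj R lam d x <= 2^-1 * frob2 (d *m x - R) + lam.
Proof. by move=> lam_ge0; rewrite lerD2l /l20; case: eqP; rewrite ?mulr0 ?mulr1. Qed.

Lemma obj_ge (s : K) (d : 'cV[K]_m) (x : 'rV[K]_N) :
  largest_singular_value R s -> frob2 d = 1 -> x != 0 ->
  2^-1 * (frob2 R - s ^+ 2) + lam <= obj R lam d x.
Proof.
move=> sR d1 /negbTE x_neq0; rewrite /obj /l20 x_neq0 mulr1 lerD2r.
by rewrite ler_wpM2l ?invr_ge0 // frob2_mul_sub_ge.
Qed.

End Objective.

Theorem proposition3 (K : realType) (m N : nat) (R : 'M[K]_(m, N)) (lam : K)
    (s1 : K) (u1 : 'cV[K]_m) (v1 : 'cV[K]_N) :
  0 <= lam ->
  largest_singular_value R s1 ->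
  frob2 u1 = 1 -> frob2 v1 = 1 ->
  R *m v1 = s1 *: u1 ->
  (2^-1 * frob2 (s1 *: (u1 *m v1^T) - R) <= 2^-1 * frob2 R - lam ->
     is_minimizer R lam u1 (s1 *: v1^T)) /\
  (~ (2^-1 * frob2 (s1 *: (u1 *m v1^T) - R) <= 2^-1 * frob2 R - lam) ->
     forall d0 : 'cV[K]_m, frob2 d0 = 1 -> is_minimizer R lam d0 0).
Proof.
move=> lam_ge0 sR u1_1 v1_1 Rv1.
have rank1E := frob2_singular_rank1_sub u1_1 v1_1 Rv1; rewrite rank1E.
have obj_u1 : obj R lam u1 (s1 *: v1^T) <= 2^-1 * (frob2 R - s1 ^+ 2) + lam.
  by rewrite -rank1E scalemxAr obj_le.
split=> [le_opt | gt_opt d0 d0_1]; split=> // d x d1.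
- have [->|x_neq0] := eqVneq x 0; last exact: le_trans obj_u1 (obj_ge _ sR d1 x_neq0).
  by rewrite obj0; apply: le_trans obj_u1 _; lra.
- have [->|x_neq0] := eqVneq x 0; first by rewrite !obj0.
  by rewrite obj0; apply: le_trans (obj_ge _ sR d1 x_neq0); lra.
Qed.
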